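(* Suppose $\mathit{Act}$ is finite. Then $\mathcal{E}_{v,f}'$ is sound modulo $\simeq$: for all monitors $m,n$, if $\mathcal{E}_{v,f}'\vdash m=n$ then $m\simeq n$.
   Context: Monitors: terms $m,n ::= v \mid a.m \mid m+n \mid x$ over a finite nonempty action set $\mathit{Act}$ and variables $x$, verdicts $v::=\mathit{end}\mid\mathit{yes}\mid\mathit{no}$. $\sum_{i\in I}m_i$ is $\mathit{end}$ for $I=\emptyset$. Semantics: $\xrightarrow{\alpha}$ ($\alpha\in\mathit{Act}\cup\{\tau\}$) is the least relation with $a.m\xrightarrow{a}m$; $m\xrightarrow{\alpha}m'$ implies $m+n\xrightarrow{\alpha}m'$ and $n+m\xrightarrow{\alpha}m'$; $v\xrightarrow{\alpha}v$ for verdicts $v$. Weak transitions: $m\xRightarrow{\varepsilon}m'$ iff $m(\xrightarrow{\tau})^*m'$; $m\xRightarrow{a}m'$ iff $m\xRightarrow{\varepsilon}\xrightarrow{a}\xRightarrow{\varepsilon}m'$; $m\xRightarrow{as'}m'$ ($s'\ne\varepsilon$) iff $m\xRightarrow{a}m_1\xRightarrow{s'}m'$. For closed $m$, $L_a(m)=\{s\mid m\xRightarrow{s}\mathit{yes}\}$, $L_r(m)=\{s\mid m\xRightarrow{s}\mathit{no}\}$; $m\simeq n$ iff $L_a,L_r$ coincide for closed terms, and iff $\sigma(m)\simeq\sigma(n)$ for all closed substitutions $\sigma$ for open terms. Notation for $s\in\mathit{Act}^*$: $s.m$ is $a_1.(\cdots a_k.m)$ if $s=a_1\dots a_k$ ($\varepsilon.m=m$);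 $s^1=s$, $s^i=s s^{i-1}$; $\mathit{pre}(s)$ is the set of prefixes of $s$ (including $\varepsilon$ and $s$); $\overline{s}^{\le}(m)=\sum_{s'\in\mathit{Act}^*,\ |s'|\le|s|,\ s'\notin\mathit{pre}(s)}s'.m$; $\overline{s}(m)=\overline{s}^{\le}(m)+s.\sum_{a\in\mathit{Act}}a.m$; for $k\ge1$, $\overline{s}^{(1)}(m)=\overline{s}(m)$ and for $k\ge2$, $\overline{s}^{(k)}(m)=\sum_{1\le i<k-1}s^i.\overline{s}^{\le}(m)+s^{k-1}.\overline{s}(m)$. $\mathcal{E}\vdash m=n$ denotes derivability by reflexivity, symmetry, transitivity, substitution and congruence for $a.\_$ and $+$. $\mathcal{E}_v$: (A1) $x+y=y+x$; (A2) $x+(y+z)=(x+y)+z$; (A3) $x+x=x$; (A4) $x+\mathit{end}=x$; for each $a\in\mathit{Act}$: ($E_a$) $a.\mathit{end}=\mathit{end}$; ($Y_a$) $\mathit{yes}=\mathit{yes}+a.\mathit{yes}$; ($N_a$) $\mathit{no}=\mathit{no}+a.\mathit{no}$; ($D_a$) $a.(x+y)=a.x+a.y$. $\mathcal{E}_v'=\mathcal{E}_v\cup\{O1\}$ with (O1) $\mathit{yes}+\mathit{no}=\mathit{yes}+\mathit{no}+x$. $\mathcal{O}=\{O2_{s,k}\mid s\in\mathit{Act}^*,k\ge1\}$ with ($O2_{s,k}$) $x+s.x+\overline{s}^{(k)}(\mathit{yes}+\mathit{no})=x+\overline{s}^{(k)}(\mathit{yes}+\mathit{no})$. $\mathcal{E}_{v,f}'=\mathcal{E}_v'\cup\mathcal{O}$.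 *)

From mathcomp Require Import all_boot.
Set Implicit Arguments.
Unset Strict Implicit.
Unset Printing Implicit Defensive.

Section Monitors.
Variable Act : finType.

Inductive verdict := vend | vyes | vno.

Inductive mon : Type :=
| Verd : verdict -> mon
| Pref : Act -> mon -> mon
| Sum  : mon -> mon -> mon
| Var  : nat -> mon.

Definition mend := Verd vend.
Definition myes := Verd vyes.
Definition mno  := Verd vno.

Fixpoint closed (m : mon) : bool :=
  match m with
  | Verd _ => true
  | Pref _ m => closed m
  | Sum m n => closed m && closed n
  | Var _ => false
  end.

Fixpoint subst (sigma : nat -> mon) (m : mon) : mon :=
  match m with
  | Verd v => Verd v
  | Pref a m => Pref a (subst sigma m)
  | Sum m n => Sum (subst sigma m) (subst sigma n)
  | Var x => sigma x
  end.

(** Labelled transitions; [None] is tau, [Some a] is the action a. *)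
Inductive step : mon -> option Act -> mon -> Prop :=
| st_pref a m : step (Pref a m) (Some a) m
| st_suml m n al m' : step m al m' -> step (Sum m n) al m'
| st_sumr m n al m' : step m al m' -> step (Sum n m) al m'
| st_verd v al : step (Verd v) al (Verd v).

Inductive taustar : mon -> mon -> Prop :=
| ts_refl m : taustar m m
| ts_step m m1 m' : step m None m1 -> taustar m1 m' -> taustar m m'.

Definition wstep1 (m : mon) (a : Act) (m' : mon) : Prop :=
  exists m1 m2, taustar m m1 /\ step m1 (Some a) m2 /\ taustar m2 m'.

Fixpoint wtrace (m : mon) (s : seq Act) (m' : mon) : Prop :=
  match s with
  | [::] => taustar m m'
  | a :: s' =>
      match s' with
      | [::] => wstep1 m a m'
      | _ :: _ => exists m1, wstep1 m a m1 /\ wtrace m1 s' m'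
      end
  end.

Definition La (m : mon) (s : seq Act) : Prop := wtrace m s myes.
Definition Lr (m : mon) (s : seq Act) : Prop := wtrace m s mno.

Definition closed_equiv (m n : mon) : Prop :=
  (forall s, La m s <-> La n s) /\ (forall s, Lr m s <-> Lr n s).

Definition mequiv (m n : mon) : Prop :=
  forall sigma : nat -> mon, (forall x, closed (sigma x)) ->
    closed_equiv (subst sigma m) (subst sigma n).

Inductive derivable (E : mon -> mon -> Prop) : mon -> mon -> Prop :=
| d_ax l r : E l r -> derivable E l r
| d_refl m : derivable E m m
| d_sym m n : derivable E m n -> derivable E n m
| d_trans m n p : derivable E m n -> derivable E n p -> derivable E m p
| d_subst sigma m n : derivable E m n ->
    derivable E (subst sigma m) (subst sigma n)
| d_pref a m n : derivable E m n -> derivable E (Pref a m) (Pref a n)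
| d_sum m m' n n' : derivable E m m' -> derivable E n n' ->
    derivable E (Sum m n) (Sum m' n').

Fixpoint bigsum (l : seq mon) : mon :=
  match l with
  | [::] => mend
  | [:: m] => m
  | m :: l' => Sum m (bigsum l')
  end.

Definition prefs (s : seq Act) (m : mon) : mon := foldr Pref m s.

Definition spow (s : seq Act) (i : nat) : seq Act := flatten (nseq i s).

Fixpoint words (n : nat) : seq (seq Act) :=
  match n with
  | 0 => [:: [::]]
  | n'.+1 => [seq a :: w | a <- enum Act, w <- words n']
  end.
Definition words_le (n : nat) : seq (seq Act) :=
  flatten [seq words i | i <- iota 0 n.+1].

Definition sbar_le (s : seq Act) (m : mon) : mon :=
  bigsum [seq prefs s' m | s' <- words_le (size s) & ~~ prefix s' s].

Definition sbar (s : seq Act) (m : mon) : mon :=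
  Sum (sbar_le s m) (prefs s (bigsum [seq Pref a m | a <- enum Act])).

Definition sbar_k (s : seq Act) (k : nat) (m : mon) : mon :=
  match k with
  | 0 | 1 => sbar s m
  | _ => Sum (bigsum [seq prefs (spow s i) (sbar_le s m) | i <- iota 1 (k - 2)])
             (prefs (spow s k.-1) (sbar s m))
  end.

Definition vx := Var 0.
Definition vy := Var 1.
Definition vz := Var 2.
Definition yn := Sum myes mno.

Inductive Evf' : mon -> mon -> Prop :=
| A1 : Evf' (Sum vx vy) (Sum vy vx)
| A2 : Evf' (Sum vx (Sum vy vz)) (Sum (Sum vx vy) vz)
| A3 : Evf' (Sum vx vx) vx
| A4 : Evf' (Sum vx mend) vx
| Ea a : Evf' (Pref a mend) mend
| Ya a : Evf' myes (Sum myes (Pref a myes))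
| Na a : Evf' mno (Sum mno (Pref a mno))
| Da a : Evf' (Pref a (Sum vx vy)) (Sum (Pref a vx) (Pref a vy))
| O1 : Evf' yn (Sum yn vx)
| O2 s k : 1 <= k ->
    Evf' (Sum (Sum vx (prefs s vx)) (sbar_k s k yn)) (Sum vx (sbar_k s k yn)).

End Monitors.

From mathcomp Require Import all_boot zify.

(* Soundness of E'_{v,f} is proved through a trace semantics in which a
   verdict, once reached, persists on every extension of the trace.
   [sem rho m v w] says that m reaches verdict v after reading exactly w,
   variables being interpreted by [rho].
   1. For the empty interpretation, [sem] coincides with the weak-transition
      semantics of monitors ([wtrace_sem]), so two terms related by [sem] on
      yes/no under every closed instance are equivalent ([sem_equiv_mequiv]).
   2. The relation [sem_equiv] ("same yes/no semantics under every
      interpretation closed under trace extension") is a congruence closed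
      under substitution, so it contains every derivable equation as soon as
      it contains the axioms.
   3. Every axiom is valid; the only non-trivial one is O2_{s,k}, whose proof
      rests on a combinatorial decomposition of words with respect to the
      powers of s ([word_decomposition]): either x already covers the extra
      summand s.x by persistence, or the trace is caught by the summand
      sbar^{(k)}_s(yes+no). *)

Set Implicit Arguments.
Unset Strict Implicit.
Unset Printing Implicit Defensive.

Section Semantics.
Variable Act : finType.
Implicit Types (m : mon Act) (u w : seq Act) (v : verdict).

Definition interp := nat -> verdict -> seq Act -> Prop.

Fixpoint sem (rho : interp) m v w : Prop :=
  match m with
  | Verd u => u = v
  | Pref a m' => if w is b :: w' then b = a /\ sem rho m' v w' else False
  | Sum p q => sem rho p v w \/ sem rho q v w
  | Var x => rho x v w
  end.

(* Verdicts are irrevocable: interpretations must be closed under extension. *)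
Definition persistent (rho : interp) : Prop :=
  forall x v w u, rho x v w -> rho x v (w ++ u).

Lemma sem_ext rho m v w u :
  persistent rho -> sem rho m v w -> sem rho m v (w ++ u).
Proof.
move=> Hrho; elim: m w => [r|a m IH|p IHp q IHq|x] w //=.
- by case: w => [|b w] //= [-> H]; split=> //; apply: IH.
- by case=> H; [left; apply: IHp | right; apply: IHq].
- exact: Hrho.
Qed.

Lemma sem_subst rho sigma m v w :
  sem rho (subst sigma m) v w <-> sem (fun x => sem rho (sigma x)) m v w.
Proof.
elim: m w => [r|a m IH|p IHp q IHq|x] w //=.
- by case: w => [|b w] //=; rewrite IH.
- by rewrite IHp IHq.
Qed.

Lemma persistent_subst rho sigma :
  persistent rho -> persistent (fun x => sem rho (sigma x)).
Proof. by move=> Hrho x v w u; apply: sem_ext. Qed.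

Definition rho0 : interp := fun _ _ _ => False.

Lemma persistent_rho0 : persistent rho0.
Proof. by []. Qed.

End Semantics.

Section OperationalCorrespondence.
Variable Act : finType.
Implicit Types (m : mon Act) (w : seq Act) (v : verdict).
Local Notation sem0 := (sem (@rho0 Act)).

Lemma step_tau_verdict m m1 :
  step m None m1 -> exists2 v, m1 = Verd _ v & sem0 m v [::].
Proof.
move=> H; remember None as al eqn:Eal; elim: H Eal => //=.
- by move=> ? ? ? ? _ IH /IH [v -> ?]; exists v; first by []; left.
- by move=> ? ? ? ? _ IH /IH [v -> ?]; exists v; first by []; right.
- by move=> v ? _; exists v.
Qed.

Lemma sem0_step_tau m v : sem0 m v [::] -> step m None (Verd _ v).
Proof.
elim: m => [r|a m _|p IHp q IHq|x] //=.
- by move=> ->; apply: st_verd.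
- by case=> [/IHp|/IHq]; [apply: st_suml | apply: st_sumr].
Qed.

Lemma step_from_verdict u al m' : step (Verd _ u) al m' -> m' = Verd _ u.
Proof. by move=> H; inversion H. Qed.

Lemma taustar_from_verdict u m' : taustar (Verd _ u) m' -> m' = Verd _ u.
Proof.
suff Hgen m : taustar m m' -> m = Verd _ u -> m' = Verd _ u by move/Hgen; apply.
elim=> {m m'} // p p1 p' Hstep _ IH Ep.
by apply: IH; rewrite Ep in Hstep; apply: step_from_verdict Hstep.
Qed.

Lemma taustar_verdict m m' :
  taustar m m' -> m' = m \/ exists2 v, m' = Verd _ v & sem0 m v [::].
Proof.
case=> [|{}m m1 {}m' Hstep Hrest]; first by left.
have [v Em1 Hv] := step_tau_verdict Hstep.
by right; exists v => //; apply: taustar_from_verdict; rewrite -Em1.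
Qed.

Lemma taustar_trans m1 m2 m3 : taustar m1 m2 -> taustar m2 m3 -> taustar m1 m3.
Proof. by elim=> // p p1 p' Hstep _ IH /IH; apply: ts_step. Qed.

Lemma sem0_step_act m a v w :
  sem0 m v (a :: w) <-> exists2 m', step m (Some a) m' & sem0 m' v w.
Proof.
elim: m w => [r|b m _|p IHp q IHq|x] w /=.
- split=> [Hr|[m' /step_from_verdict -> //]].
  by exists (Verd _ r); first exact: st_verd.
- split=> [[-> H]|[m' Hstep H]]; first by exists m => //; apply: st_pref.
  by inversion Hstep; subst.
- rewrite IHp IHq; split=> [[[m' H1 H2]|[m' H1 H2]]|[m' Hstep H]].
  + by exists m' => //; apply: st_suml.
  + by exists m' => //; apply: st_sumr.
  + by inversion Hstep; subst; [left | right]; exists m'.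
- by split=> // [[m' Hstep]]; inversion Hstep.
Qed.

Lemma wtrace_cons m a w m' :
  wtrace m (a :: w) m' <-> exists m1, wstep1 m a m1 /\ wtrace m1 w m'.
Proof.
case: w => [|b w] //=; split=> [H|[m1 [[p [q [H1 [H2 H3]]]] H4]]].
- by exists m'; split=> //; apply: ts_refl.
- by exists p, q; do 2!split=> //; apply: taustar_trans H3 H4.
Qed.

Lemma sem0_taustar m m' v w : taustar m m' -> sem0 m' v w -> sem0 m v w.
Proof.
case/taustar_verdict=> [-> // | [u -> Hu] /= <-].
by rewrite -[w]/([::] ++ w); apply: sem_ext (@persistent_rho0 Act) Hu.
Qed.

Theorem wtrace_sem m w v : wtrace m w (Verd _ v) <-> sem0 m v w.
Proof.
elim: w m => [|a w IH] m.
- split=> [/taustar_verdict [<- // | [u [->] Hu //]] | /sem0_step_tau Hstep].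
  exact: ts_step Hstep (ts_refl _).
- rewrite wtrace_cons; split=> [[m1 [[p [q [H1 [H2 H3]]]] /IH Hm1]] | ].
  + apply: sem0_taustar H1 _; apply/sem0_step_act; exists q => //.
    exact: sem0_taustar H3 Hm1.
  + case/sem0_step_act=> m' Hstep /IH Hm'; exists m'; split=> //.
    by exists m, m'; split; [apply: ts_refl | split=> //; apply: ts_refl].
Qed.
End OperationalCorrespondence.

Section Words.
Variable Act : finType.
Implicit Types (s t u z : seq Act).

Lemma mem_words_le t n : size t <= n -> t \in words_le Act n.
Proof.
have mem_words u : u \in words Act (size u).
  by elim: u => [|a u IH] //=; apply/allpairsP; exists (a, u); rewrite mem_enum.
by move=> Ht; apply/flatten_mapP; exists (size t); rewrite ?mem_iota ?mem_words.
Qed.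

Lemma spowS s i : spow s i.+1 = s ++ spow s i.
Proof. by []. Qed.

Lemma spowD s i j : spow s (i + j) = spow s i ++ spow s j.
Proof. by elim: i => //= i IH; rewrite !spowS IH catA. Qed.

(* Every word u either is a prefix of the infinite word s s s ..., which we
   express as [prefix u (s ++ u)], or leaves it: u = s^j t z where t, of
   length at most |s|, is not a prefix of s. *)
Lemma word_decomposition s u : prefix u (s ++ u) \/
  exists j t z, [/\ u = spow s j ++ t ++ z, size t <= size s & ~~ prefix t s].
Proof.
case: s => [|c s0]; first by left; apply: prefix_refl.
set s := c :: s0.
elim: {u}(size u).+1 {-2}u (ltnSn (size u)) => // N IH u Hu.
have Eu : u = take (size s) u ++ drop (size s) u by rewrite cat_take_drop.
have Hsize : size (take (size s) u) <= size s by rewrite size_take_min geq_minl.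
case: (boolP (prefix (take (size s) u) s)) => Htake; last first.
  by right; exists 0, (take (size s) u), (drop (size s) u).
case: (leqP (size u) (size s)) => Hus.
  by left; rewrite take_oversize // in Htake; apply: prefix_catl.
have Es : take (size s) u = s.
  by move: Htake; rewrite prefixE size_takel ?(ltnW Hus) // take_oversize // => /eqP.
have /IH [Hpre | [j [t [z [Edrop Ht Hts]]]]] : size (drop (size s) u) < N.
- by rewrite size_drop; move: Hu Hus; rewrite /s /=; lia.
- by left; rewrite Eu Es prefix_catr // eqxx.
- by right; exists j.+1, t, z; rewrite Eu Es Edrop spowS catA.
Qed.
End Words.

(* Traces caught by the "escape" summands sbar_s^{<=}, sbar_s and sbar_s^{(k)}
   of axiom O2. They are stated for a term m reaching v on every trace, which
   is what yes+no does for v = yes, no. *)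
Section EscapeSummands.
Variable Act : finType.
Variables (rho : interp Act) (v : verdict).
Implicit Types (m : mon Act) (s t u w z : seq Act).

Lemma sem_bigsum_map (A : eqType) (f : A -> mon Act) (l : seq A) x w :
  x \in l -> sem rho (f x) v w -> sem rho (bigsum (map f l)) v w.
Proof.
elim: l => //= y l IH; rewrite inE => /orP [/eqP -> | Hxl] Hx.
- by case: l {IH} => //=; left.
- by case: l IH Hxl => //= y' l IH Hxl; right; apply: IH.
Qed.

Lemma sem_prefs s m w : sem rho m v w -> sem rho (prefs s m) v (s ++ w).
Proof. by elim: s => //= a s IH Hm; split=> //; apply: IH. Qed.

Lemma sem_prefsP s m w :
  sem rho (prefs s m) v w -> exists2 u, w = s ++ u & sem rho m v u.
Proof.
elim: s w => [|a s IH] [|b w] //=; try by move=> Hm; eexists.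
by case=> -> /IH [u -> Hu]; exists u.
Qed.

Variable m : mon Act.
Hypothesis m_total : forall w, sem rho m v w.

Lemma sem_sbar_le s t z :
  size t <= size s -> ~~ prefix t s -> sem rho (sbar_le s m) v (t ++ z).
Proof.
move=> Hsize Hpre; apply: (@sem_bigsum_map _ (fun t' => prefs t' m) _ t).
  by rewrite mem_filter Hpre mem_words_le.
exact: sem_prefs.
Qed.

Lemma sem_sbar_ext s w : w != [::] -> sem rho (sbar s m) v (s ++ w).
Proof.
case: w => [|a w] // _; right; apply: sem_prefs.
apply: (@sem_bigsum_map _ (fun b => Pref b m) _ a); first by rewrite mem_enum.
by split.
Qed.

(* sbar_s^{(k)}(m) catches every trace s s^j t z with t escaping s as above:
   according to j, either a summand s^i.sbar_s^{<=}(m) or the last summand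
   s^{k-1}.sbar_s(m) is responsible. *)
Lemma sem_sbar_k s k j t z : 0 < k -> size t <= size s -> ~~ prefix t s ->
  sem rho (sbar_k s k m) v (s ++ spow s j ++ t ++ z).
Proof.
move=> Hk Hsize Hpre; have Ht : t != [::] by case: t Hpre Hsize => //; rewrite prefix0s.
have Hnil x : x ++ t ++ z != [::] by case: x => //; case: t Ht {Hsize Hpre}.
case: k Hk => [|[|k]] // _; first exact: sem_sbar_ext (Hnil _).
rewrite catA -spowS /=.
case: (ltngtP j k) => Hjk.
- left; apply: (@sem_bigsum_map _ (fun i => prefs (spow s i) (sbar_le s m)) _ j.+1).
    by rewrite mem_iota /= subn2 add1n ltnS.
  by apply: sem_prefs; apply: sem_sbar_le.
- have -> : spow s j.+1 = spow s k.+1 ++ s ++ spow s (j - k).-1.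
    by rewrite -spowS -spowD; congr spow; lia.
  by right; rewrite -catA; apply: sem_prefs; rewrite -catA; apply: sem_sbar_ext.
- by right; rewrite Hjk; apply: sem_prefs; left; apply: sem_sbar_le.
Qed.
End EscapeSummands.

Section Soundness.
Variable Act : finType.
Implicit Types (m n p : mon Act) (v : verdict).

Definition sem_equiv m n : Prop :=
  forall rho, persistent rho -> forall v, v <> vend -> forall w,
    sem rho m v w <-> sem rho n v w.

Lemma sem_yn rho v w : v <> vend -> sem rho (yn Act) v w.
Proof. by case: v => //= _; [left | right]. Qed.

(* The decisive axiom: a trace of s.x that x does not cover by persistence
   escapes the powers of s and is caught by sbar_s^{(k)}(yes+no). *)
Lemma O2_sem_equiv s k : 0 < k ->
  sem_equiv (Sum (Sum (vx Act) (prefs s (vx Act))) (sbar_k s k (yn Act)))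
            (Sum (vx Act) (sbar_k s k (yn Act))).
Proof.
move=> Hk rho Hrho v Hv w /=; split; last by case; [left; left | right].
case=> [[Hx | /sem_prefsP [u -> Hx]] | Hbar]; [by left | | by right].
case: (word_decomposition s u) => [/prefixP [r ->] | [j [t [z [-> Ht Hts]]]]].
- by left; apply: Hrho.
- by right; apply: sem_sbar_k => // w'; apply: sem_yn.
Qed.

(* The remaining axioms hold by unfolding; A4 and E_a need v <> end. *)
Lemma axiom_sem_equiv l r : Evf' l r -> sem_equiv l r.
Proof.
case=> [||||a|a|a|a||s k Hk]; last exact: O2_sem_equiv;
  move=> rho _ v Hv w /=; have Hv' : vend <> v by apply: nesym.
- tauto.
- tauto.
- tauto.
- tauto.
- by case: w => [|b w] /=; tauto.
- by case: w => [|b w] /=; tauto.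
- by case: w => [|b w] /=; tauto.
- by case: w => [|b w] /=; tauto.
- have := sem_yn rho w Hv => /=; tauto.
Qed.

Lemma sem_equiv_sym m n : sem_equiv m n -> sem_equiv n m.
Proof. by move=> H rho Hrho v Hv w; rewrite H. Qed.

Lemma sem_equiv_trans m n p : sem_equiv m n -> sem_equiv n p -> sem_equiv m p.
Proof. by move=> H1 H2 rho Hrho v Hv w; rewrite H1 ?H2. Qed.

Lemma sem_equiv_subst sigma m n :
  sem_equiv m n -> sem_equiv (subst sigma m) (subst sigma n).
Proof.
move=> H rho Hrho v Hv w; rewrite !sem_subst.
by apply: H => //; apply: persistent_subst.
Qed.

Lemma sem_equiv_pref a m n : sem_equiv m n -> sem_equiv (Pref a m) (Pref a n).
Proof. by move=> H rho Hrho v Hv [|b w] //=; rewrite H. Qed.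

Lemma sem_equiv_sum m m' n n' :
  sem_equiv m m' -> sem_equiv n n' -> sem_equiv (Sum m n) (Sum m' n').
Proof. by move=> H1 H2 rho Hrho v Hv w /=; rewrite H1 ?H2. Qed.

Theorem derivable_sem_equiv m n : derivable (@Evf' Act) m n -> sem_equiv m n.
Proof.
elim=> {m n}.
- exact: axiom_sem_equiv.
- by [].
- by move=> m n _; apply: sem_equiv_sym.
- by move=> m n p _ H1 _; apply: sem_equiv_trans.
- by move=> sigma m n _; apply: sem_equiv_subst.
- by move=> a m n _; apply: sem_equiv_pref.
- by move=> m m' n n' _ H1 _; apply: sem_equiv_sum.
Qed.

(* Semantic validity implies equivalence of all closed instances, since on
   closed terms [sem] is the weak-trace semantics ([wtrace_sem]). *)
Lemma sem_equiv_mequiv m n : sem_equiv m n -> mequiv m n.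
Proof.
move=> H sigma _.
have Hverdict v : v <> vend -> forall w,
    wtrace (subst sigma m) w (Verd _ v) <-> wtrace (subst sigma n) w (Verd _ v).
  by move=> Hv w; rewrite !wtrace_sem; apply: sem_equiv_subst.
by split=> s; apply: Hverdict.
Qed.
End Soundness.

Theorem mainTheorem14 (Act : finType) (Act_nonempty : 0 < #|Act|)
  (m n : mon Act) :
  derivable (@Evf' Act) m n -> mequiv m n.
Proof. by move=> Hder; apply/sem_equiv_mequiv/derivable_sem_equiv. Qed.
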